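(* Let ${\bf v}\in\mathcal V$. (a) If ${\bf v}$ has at most $\lfloor n/2\rfloor$ positive prizes (i.e. $v_r=0$ for all $r>\lfloor n/2\rfloor$), then $L({\bf v})\le 0$, so $M({\bf v},\theta)$ and the symmetric equilibrium effort $x^*({\bf v},\theta)$ are nonincreasing in $\theta\in[0,1]$ (effort decreases with loss aversion). (b) If ${\bf v}$ has at least $\lceil n/2\rceil$ equal prizes at the top (i.e. $v_1=v_2=\dots=v_{\lceil n/2\rceil}$), then $L({\bf v})\ge 0$, so $M({\bf v},\theta)$ and $x^*({\bf v},\theta)$ are nondecreasing in $\theta\in[0,1]$ (effort increases with loss aversion).
   Context: Fix an integer $n\ge 2$ and a noise distribution with cdf $F$ and density $f$ on $\mathbb R$ (integrals finite). For $r=1,\dots,n$ let $g_r(u)=u^{n-r}(1-u)^{r-1}$ and $\beta_r=\binom{n-1}{r-1}\int g_r'(F(t))f(t)^2dt$; $B_r=\sum_{k=1}^r\beta_k$. Let $\mathcal V=\{{\bf v}\in\mathbb R^n: v_1\ge\dots\ge v_n\ge 0,\ \sum_r v_r=1\}$, $R({\bf v})=\sum_r\beta_rv_r$, $L({\bf v})=-\frac1n\sum_{r=1}^n\sum_{s<r}(\beta_r+\beta_s)(v_s-v_r)$, $M({\bf v},\theta)=R({\bf v})+\theta L({\bf v})$ with loss-aversion parameter $\theta\in[0,1]$. The effort cost $c$ is strictly increasing, differentiable and strictly convex on $[0,\bar x]$, $\bar x=c^{-1}(1)$, with $c(0)=c'(0)=0$. The symmetric equilibrium effort $x^*({\bf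 v},\theta)$ is the effort solving the first-order condition $c'(x^* )=M({\bf v},\theta)$; since $c'$ is strictly increasing, $x^*$ is a strictly increasing function of $M({\bf v},\theta)$. *)

From HB Require Import structures.
From mathcomp Require Import all_boot all_order all_algebra.
From mathcomp Require Import all_classical all_reals all_analysis.
Set Implicit Arguments. Unset Strict Implicit. Unset Printing Implicit Defensive.
Import Order.TTheory GRing.Theory Num.Theory.
Import numFieldNormedType.Exports.
Local Open Scope classical_set_scope.
Local Open Scope ring_scope.

Section Defs.
Variable R : realType.

Definition gfun (n r : nat) (u : R) : R := u ^+ (n - r) * (1 - u) ^+ (r - 1).

Definition beta (n : nat) (F f : R -> R) (r : nat) : R :=
  ('C(n.-1, r.-1))%:R *
  Rintegral (@lebesgue_measure R) setT (fun t => derive1 (gfun n r) (F t) * f t ^+ 2).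

(* prize vectors v : indices 1..n (v r for r = 1..n) *)
Definition inV (n : nat) (v : nat -> R) : Prop :=
  (forall r, (1 <= r < n)%N -> v r.+1 <= v r) /\ 0 <= v n /\
  \sum_(1 <= r < n.+1) v r = 1.

Definition Rrev (n : nat) (b : nat -> R) (v : nat -> R) : R :=
  \sum_(1 <= r < n.+1) b r * v r.

Definition Lloss (n : nat) (b : nat -> R) (v : nat -> R) : R :=
  - (n%:R)^-1 * \sum_(1 <= r < n.+1) \sum_(1 <= s < r) (b r + b s) * (v s - v r).

Definition Mmarg (n : nat) (b : nat -> R) (v : nat -> R) (theta : R) : R :=
  Rrev n b v + theta * Lloss n b v.

Definition noise_ok (n : nat) (F f : R -> R) : Prop :=
  measurable_fun setT f /\ (forall t, 0 <= f t) /\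
  (@lebesgue_measure R).-integrable setT (fun t => (f t)%:E) /\
  Rintegral (@lebesgue_measure R) setT f = 1 /\
  (forall t, F t = Rintegral (@lebesgue_measure R) `]-oo, t] f) /\
  (forall r, (1 <= r <= n)%N ->
     (@lebesgue_measure R).-integrable setT
       (fun t => (derive1 (gfun n r) (F t) * f t ^+ 2)%:E)).

Definition cost_ok (c : R -> R) (xbar : R) : Prop :=
  0 < xbar /\ c 0 = 0 /\ c xbar = 1 /\
  (forall x, 0 <= x <= xbar -> derivable c x 1) /\
  derive1 c 0 = 0 /\
  (forall x y, 0 <= x <= xbar -> 0 <= y <= xbar -> x < y -> c x < c y) /\
  (forall x y t, 0 <= x <= xbar -> 0 <= y <= xbar -> x != y -> 0 < t < 1 ->
     c (t * x + (1 - t) * y) < t * c x + (1 - t) * c y).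

(* xs is a symmetric equilibrium effort profile in theta: first-order condition *)
Definition is_xstar (c : R -> R) (xbar : R) (M : R -> R) (xs : R -> R) : Prop :=
  forall theta, 0 <= theta <= 1 -> 0 <= xs theta <= xbar /\ derive1 c (xs theta) = M theta.

End Defs.

From HB Require Import structures.
From mathcomp Require Import all_boot all_order all_algebra.
From mathcomp Require Import all_classical all_reals all_analysis.
From mathcomp Require Import ring lra zify.
Import Order.TTheory GRing.Theory Num.Theory.
Set Implicit Arguments. Unset Strict Implicit. Unset Printing Implicit Defensive.
Local Open Scope ring_scope.

(* Summation by parts expresses L through the partial sums B_k of the beta_r:
   as B_n = 0,  L(v) = -(1/n) sum_k (v_k - v_(k+1)) (n - 2k) B_k.
   The binomially weighted derivatives of the g_r telescope, so that
   B_k = (n-1) \int b_(k-1)(F t) f(t)^2 dt for the Bernstein polynomial b_(k-1)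
   of degree n-2; hence B_k >= 0 and B_n = 0.  Prizes vanishing beyond n/2 kill
   the terms with 2k > n, equal top prizes kill those with 2k < n, and every
   remaining term has the claimed sign.  M is affine in theta with slope L, and
   the effort solving c'(x) = M grows with M since the derivative of a strictly
   convex function is strictly increasing. *)

Section PartialSums.
Variable R : comPzRingType.

Definition psum (b : nat -> R) k := \sum_(1 <= i < k.+1) b i.

Lemma psumS b k : psum b k.+1 = psum b k + b k.+1.
Proof. by rewrite /psum big_nat_recr. Qed.

Lemma sum_by_parts (w v : nat -> R) m :
  \sum_(1 <= s < m.+1) w s * (v s - v m.+1) =
  \sum_(1 <= k < m.+1) (v k - v k.+1) * psum w k.
Proof.
elim: m => [|m IH]; first by rewrite !big_geq.
rewrite big_nat_recr //= [RHS]big_nat_recr //= -IH psumS.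
have -> : \sum_(1 <= s < m.+1) w s * (v s - v m.+2) =
    \sum_(1 <= s < m.+1) w s * (v s - v m.+1) + psum w m * (v m.+1 - v m.+2).
  by rewrite /psum big_distrl -big_split /=; apply: eq_bigr => i _; ring.
ring.
Qed.

Lemma double_sum_psum (b v : nat -> R) m :
  \sum_(1 <= r < m.+1) \sum_(1 <= s < r) (b r + b s) * (v s - v r) =
  \sum_(1 <= k < m.+1)
    (v k - v k.+1) * ((m%:R - 2 * k%:R) * psum b k + k%:R * psum b m).
Proof.
elim: m => [|m IH]; first by rewrite !big_geq.
rewrite big_nat_recr //= IH [in RHS]big_nat_recr //= psumS.
have inner : \sum_(1 <= s < m.+1) (b m.+1 + b s) * (v s - v m.+1) =
    \sum_(1 <= k < m.+1) (v k - v k.+1) * (b m.+1 * k%:R + psum b k).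
  transitivity (b m.+1 * \sum_(1 <= s < m.+1) ((fun=> 1) s * (v s - v m.+1)) +
      \sum_(1 <= s < m.+1) b s * (v s - v m.+1)).
    by rewrite big_distrr -big_split /=; apply: eq_bigr => i _; ring.
  rewrite (sum_by_parts (fun=> 1)) sum_by_parts big_distrr -big_split /=.
  by apply: eq_bigr => k _; rewrite /psum sumr_const_nat subSS subn0; ring.
rewrite inner -big_split /=.
have -> : (v m.+1 - v m.+2) * ((m.+1%:R - 2 * m.+1%:R) * (psum b m + b m.+1) +
    m.+1%:R * (psum b m + b m.+1)) = 0 by ring.
by rewrite addr0; apply: eq_bigr => k _; rewrite [m.+1%:R]mulrS; ring.
Qed.

End PartialSums.

Section LossSign.
Variables (R : realType) (n : nat) (b v : nat -> R).
Hypotheses (psum_ge0 : forall k, (k <= n)%N -> 0 <= psum b k) (psum_n : psum b n = 0).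
Hypothesis v_nonincr : forall r, (1 <= r < n)%N -> v r.+1 <= v r.

Lemma Lloss_psum : Lloss n b v =
  - n%:R^-1 * \sum_(1 <= k < n.+1) (v k - v k.+1) * ((n%:R - 2 * k%:R) * psum b k).
Proof.
rewrite /Lloss double_sum_psum psum_n.
by congr (_ * _); apply: eq_bigr => k _; ring.
Qed.

Lemma Lloss_le0 : (forall r, (n./2 < r <= n)%N -> v r = 0) -> Lloss n b v <= 0.
Proof.
move=> v0; rewrite Lloss_psum mulNr oppr_le0.
apply: mulr_ge0; first by rewrite invr_ge0 ler0n.
rewrite big_nat_cond; apply: sumr_ge0 => k /andP[/andP[k1 kn] _].
have [->|kn'] := eqVneq k n; first by rewrite psum_n !mulr0.
have kn2 : (k < n)%N by lia.
have [k2|k2] := leqP (2 * k) n.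
  apply: mulr_ge0; first by rewrite subr_ge0 v_nonincr ?k1.
  by apply: mulr_ge0; [rewrite subr_ge0 -natrM ler_nat | exact/psum_ge0/ltnW].
have := odd_double_half n; have : (odd n <= 1)%N by case: (odd n).
by move=> *; rewrite (v0 k) ?(v0 k.+1) ?subrr ?mul0r //; lia.
Qed.

Lemma Lloss_ge0 : (forall r, (1 <= r <= uphalf n)%N -> v r = v 1%N) ->
  0 <= Lloss n b v.
Proof.
move=> v1; rewrite Lloss_psum mulNr oppr_ge0.
apply: mulr_ge0_le0; first by rewrite invr_ge0 ler0n.
rewrite big_nat_cond; apply: sumr_le0 => k /andP[/andP[k1 kn] _].
have [->|kn'] := eqVneq k n; first by rewrite psum_n !mulr0.
have kn2 : (k < n)%N by lia.
have := odd_double_half n; have := uphalf_half n.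
have : (odd n <= 1)%N by case: (odd n).
move=> *; have [k2|k2] := leqP k.+1 (uphalf n).
  by rewrite (v1 k) ?(v1 k.+1) ?subrr ?mul0r //; lia.
apply: mulr_ge0_le0; first by rewrite subr_ge0 v_nonincr ?k1.
apply: mulr_le0_ge0; last exact/psum_ge0/ltnW.
by rewrite subr_le0 -natrM ler_nat; lia.
Qed.

End LossSign.

Lemma Mmarg_nonincreasing (R : realType) n (b v : nat -> R) th1 th2 :
  Lloss n b v <= 0 -> th1 <= th2 -> Mmarg n b v th2 <= Mmarg n b v th1.
Proof. by rewrite /Mmarg => L0 th12; rewrite lerD2l; nra. Qed.

Lemma Mmarg_nondecreasing (R : realType) n (b v : nat -> R) th1 th2 :
  0 <= Lloss n b v -> th1 <= th2 -> Mmarg n b v th1 <= Mmarg n b v th2.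
Proof. by rewrite /Mmarg => L0 th12; rewrite lerD2l; nra. Qed.

Section Bernstein.
Variable R : realType.

Lemma derive1_gfun n k (u : R) : derive1 (gfun n k) u =
  (n - k)%:R * u ^+ (n - k).-1 * (1 - u) ^+ (k - 1)
  - (k - 1)%:R * u ^+ (n - k) * (1 - u) ^+ (k - 1).-1.
Proof.
have -> : gfun n k = (@id R) ^+ (n - k) * (cst 1 - id) ^+ (k - 1).
  by apply/funext => x; rewrite /gfun !fctE.
rewrite derive1E derive_val /= !fctE /GRing.scale /= mulr1 sub0r mulrN1; ring.
Qed.

(* [bern N u i.+1] is the Bernstein polynomial C(N,i) u^(N-i) (1-u)^i; the
   shift by one and [bern N u 0 = 0] make the sums below telescope. *)
Definition bern (N : nat) (u : R) (j : nat) : R :=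
  if j is i.+1 then 'C(N, i)%:R * u ^+ (N - i) * (1 - u) ^+ i else 0.

Lemma binom_derive1_gfun N j u :
  'C(N.+1, j)%:R * derive1 (gfun N.+2 j.+1) u =
  N.+1%:R * (bern N u j.+1 - bern N u j).
Proof.
rewrite derive1_gfun /=; case: j => [|i].
  by rewrite !subSS !subn0 /= !bin0; ring.
rewrite !subSS !subn0 /= -subnS.
have down : ('C(N.+1, i.+1) * (N - i))%N = (N.+1 * 'C(N, i.+1))%N.
  by rewrite mulnC (mul_bin_down N.+1 i.+1) subSS.
have diag : ('C(N.+1, i.+1) * i.+1)%N = (N.+1 * 'C(N, i))%N.
  by rewrite mulnC -(mul_bin_diag N.+1 i).
transitivity (('C(N.+1, i.+1) * (N - i))%N%:R * (u ^+ (N - i.+1) * (1 - u) ^+ i.+1)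
   - ('C(N.+1, i.+1) * i.+1)%N%:R * (u ^+ (N - i) * (1 - u) ^+ i)).
  by rewrite !natrM; ring.
by rewrite down diag !natrM; ring.
Qed.

Lemma sum_binom_derive1_gfun N r u :
  \sum_(0 <= j < r) 'C(N.+1, j)%:R * derive1 (gfun N.+2 j.+1) u =
  N.+1%:R * bern N u r.
Proof.
under eq_bigr do rewrite binom_derive1_gfun.
by rewrite -big_distrr /= telescope_sumr // subr0.
Qed.

Lemma bern_ge0 N u j : 0 <= u <= 1 -> 0 <= bern N u j.
Proof.
case: j => [|i] /andP[u0 u1] //=.
by rewrite !mulr_ge0 ?exprn_ge0 ?subr_ge0.
Qed.

Lemma bern_over N u : bern N u N.+2 = 0.
Proof. by rewrite /= bin_small // !mul0r. Qed.

End Bernstein.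

Section Integrals.
Local Open Scope classical_set_scope.

Lemma Rintegral_sum d (T : measurableType d) (R : realType)
    (mu : {measure set T -> \bar R}) (D : set T) (h : nat -> T -> R) r :
  measurable D -> (forall j, (j < r)%N -> mu.-integrable D (EFin \o h j)) ->
  Rintegral mu D (fun t => \sum_(0 <= j < r) h j t) =
  \sum_(0 <= j < r) Rintegral mu D (h j).
Proof.
move=> mD; elim: r => [|r IH] hi.
  by under eq_Rintegral do rewrite big_geq//; rewrite Rintegral_cst // mul0r big_geq.
have sum_int : mu.-integrable D (EFin \o fun t => \sum_(0 <= j < r) h j t).
  have := integrable_sum (mu := mu) mD (index_enum 'I_r)
    (h := fun (j : 'I_r) t => (h j t)%:E) (P := xpredT)
    (fun j _ => hi j (ltn_trans (ltn_ord j) (ltnSn r))).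
  by apply: (eq_integrable mD) => t _ /=; rewrite sumEFin big_mkord.
under eq_Rintegral do rewrite big_nat_recr//.
by rewrite RintegralD // ?IH ?big_nat_recr // => [j jr|]; [exact/hi/ltnW | exact: hi].
Qed.

Variable R : realType.
Notation mu := (@lebesgue_measure R).

Lemma Rintegral_density_le1 (f : R -> R) (A : set R) : measurable A ->
  (forall t, 0 <= f t) -> mu.-integrable setT (fun t => (f t)%:E) ->
  Rintegral mu setT f = 1 -> 0 <= Rintegral mu A f <= 1.
Proof.
move=> mA f0 fi f1; rewrite Rintegral_ge0 //=.
have := @Rintegral_setU _ _ R mu _ (~` A) f mA (measurableC mA).
rewrite setUv => /(_ fi) H; rewrite -f1 H; last by rewrite /disj_set setICr.
by rewrite lerDl Rintegral_ge0.
Qed.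

Lemma psum_beta N (F f : R -> R) r : noise_ok N.+2 F f -> (r <= N.+2)%N ->
  psum (beta N.+2 F f) r =
  Rintegral mu setT (fun t => N.+1%:R * bern N (F t) r * f t ^+ 2).
Proof.
move=> [_ [_ [_ [_ [_ beta_int]]]]] rn.
have term_int j : (j < r)%N -> mu.-integrable setT (EFin \o fun t =>
    'C(N.+1, j)%:R * (derive1 (gfun N.+2 j.+1) (F t) * f t ^+ 2)).
  move=> jr; have := integrableZl measurableT ('C(N.+1, j)%:R)
    (beta_int j.+1 (leq_trans jr rn)).
  by apply: eq_integrable => // t _ /=; rewrite EFinM.
rewrite /psum big_add1 /=.
transitivity (\sum_(0 <= j < r) Rintegral mu setT (fun t =>
    'C(N.+1, j)%:R * (derive1 (gfun N.+2 j.+1) (F t) * f t ^+ 2))).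
  rewrite big_nat_cond [RHS]big_nat_cond; apply: eq_bigr => j /andP[/andP[_ jr] _].
  by rewrite /beta /= RintegralZl //; apply: beta_int; exact: leq_trans jr rn.
rewrite -Rintegral_sum //; apply: eq_Rintegral => t _.
by rewrite -sum_binom_derive1_gfun big_distrl /=; apply: eq_bigr => j _; rewrite mulrA.
Qed.

Lemma psum_beta_ge0 N (F f : R -> R) k : noise_ok N.+2 F f -> (k <= N.+2)%N ->
  0 <= psum (beta N.+2 F f) k.
Proof.
move=> hn kn; rewrite psum_beta //; apply: Rintegral_ge0 => t _.
have [_ [f0 [fi [f1 [FE _]]]]] := hn.
have F01 : 0 <= F t <= 1.
  by rewrite FE; apply: Rintegral_density_le1 => //; exact: measurable_itv.
by rewrite !mulr_ge0 ?bern_ge0 ?exprn_even_ge0.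
Qed.

Lemma psum_beta_n N (F f : R -> R) : noise_ok N.+2 F f ->
  psum (beta N.+2 F f) N.+2 = 0.
Proof.
move=> hn; rewrite psum_beta //.
under eq_Rintegral do rewrite bern_over mulr0 mul0r.
by rewrite Rintegral_cst // mul0r.
Qed.

End Integrals.

Section StrictConvexity.
Local Open Scope classical_set_scope.
Variable R : realType.

Definition slope (c : R -> R) x y := (c y - c x) / (y - x).

Lemma derive1_le_of_right_quotients (c : R -> R) x K e :
  derivable c x 1 -> 0 < e ->
  (forall h, 0 < h -> h <= e -> c (h + x) - c x <= h * K) -> derive1 c x <= K.
Proof.
move=> dc e0 hK; rewrite derive1E /derive.
set g := (fun h : R => _).
have cv : g @ 0^' --> lim (g @ 0^') by exact: dc.
have cvr : g @ 0^'+ --> lim (g @ 0^').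
  move=> A /cv /nbhs_ballP [_ /posnumP[e'] xe_A].
  by exists e'%:num => //= y xe_y /gt_eqF/negbT/xe_A; exact.
apply: (cvgr_to_le cvr); near=> h.
have h0 : 0 < h by near: h; exact: nbhs_right_gt.
have he : h <= e by near: h; exact: nbhs_right_le.
rewrite /g /= /GRing.scale /= mulr1 -(ler_pM2l h0) mulrA mulfV ?gt_eqF // mul1r.
exact: hK.
Unshelve. all: by end_near.
Qed.

Lemma derive1_ge_of_left_quotients (c : R -> R) y K e :
  derivable c y 1 -> 0 < e ->
  (forall h, 0 < h -> h <= e -> h * K <= c y - c (y - h)) -> K <= derive1 c y.
Proof.
move=> dc e0 hK; rewrite derive1E /derive.
set g := (fun h : R => _).
have cv : g @ 0^' --> lim (g @ 0^') by exact: dc.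
have cvl : g @ 0^'- --> lim (g @ 0^').
  move=> A /cv /nbhs_ballP [_ /posnumP[e'] xe_A].
  by exists e'%:num => //= z xe_z /lt_eqF/negbT/xe_A; exact.
apply: (cvgr_to_ge cvl); near=> h.
have h0 : h < 0 by near: h; exact: nbhs_left_lt.
have he : - e <= h by near: h; apply: nbhs_left_ge; rewrite ltrNl oppr0.
rewrite /g /= /GRing.scale /= mulr1 -(ler_nM2l h0) mulrA mulfV ?lt_eqF // mul1r.
have := hK (- h); rewrite oppr_gt0 lerNl opprK mulNr [y + h]addrC => /(_ h0 he).
lra.
Unshelve. all: by end_near.
Qed.

Variables (c : R -> R) (a b : R).
Hypothesis c_convex : forall x y t : R, a <= x <= b -> a <= y <= b -> x != y ->
  0 < t < 1 -> c (t * x + (1 - t) * y) < t * c x + (1 - t) * c y.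

Section Chord.
Variables (x y : R).
Hypotheses (ax : a <= x) (xy : x < y) (yb : y <= b).

Let xab : a <= x <= b. Proof. by rewrite ax (le_trans (ltW xy)). Qed.
Let yab : a <= y <= b. Proof. by rewrite yb (le_trans ax (ltW xy)). Qed.
Let yx0 : y - x != 0. Proof. by rewrite subr_eq0 gt_eqF. Qed.

Lemma chord_right h : 0 < h -> h <= y - x -> c (h + x) - c x <= h * slope c x y.
Proof.
move=> h0 hd; have [->|hd'] := eqVneq h (y - x).
  by rewrite subrK /slope mulrC divfK.
have t01 : 0 < 1 - h / (y - x) < 1.
  rewrite subr_gt0 ltrBlDr ltrDl divr_gt0 ?subr_gt0 // andbT.
  by rewrite ltr_pdivrMr ?subr_gt0 // mul1r lt_neqAle hd' hd.
have := c_convex xab yab (negbT (lt_eqF xy)) t01.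
have -> : (1 - h / (y - x)) * x + (1 - (1 - h / (y - x))) * y = h + x by field.
have -> : (1 - h / (y - x)) * c x + (1 - (1 - h / (y - x))) * c y =
  c x + h * slope c x y by rewrite /slope; field.
by move/ltW; rewrite -lerBlDl.
Qed.

Lemma chord_left h : 0 < h -> h <= y - x -> h * slope c x y <= c y - c (y - h).
Proof.
move=> h0 hd; have [->|hd'] := eqVneq h (y - x).
  have -> : y - (y - x) = x by ring.
  by rewrite /slope mulrC divfK.
have t01 : 0 < h / (y - x) < 1.
  rewrite divr_gt0 ?subr_gt0 //=.
  by rewrite ltr_pdivrMr ?subr_gt0 // mul1r lt_neqAle hd' hd.
have := c_convex xab yab (negbT (lt_eqF xy)) t01.
have -> : h / (y - x) * x + (1 - h / (y - x)) * y = y - h by field.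
have -> : h / (y - x) * c x + (1 - h / (y - x)) * c y =
  c y - h * slope c x y by rewrite /slope; field.
by move/ltW; rewrite lerBrDl addrC -lerBrDl.
Qed.

End Chord.

Lemma slope_midpoint_lt x y : a <= x -> x < y -> y <= b ->
  slope c x ((x + y) / 2) < slope c ((x + y) / 2) y.
Proof.
move=> ax xy yb.
have xab : a <= x <= b by rewrite ax (le_trans (ltW xy)).
have yab : a <= y <= b by rewrite yb (le_trans ax (ltW xy)).
have half : 0 < (1 / 2 : R) < 1 by apply/andP; split; lra.
have := c_convex xab yab (negbT (lt_eqF xy)) half.
set m := (x + y) / 2.
have -> : 1 / 2 * x + (1 - 1 / 2) * y = m by rewrite /m; field.
move=> mid; rewrite /slope.
have -> : y - m = m - x by rewrite /m; field.
rewrite -subr_gt0 -mulrBl; apply: divr_gt0; [lra | rewrite /m; lra].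
Qed.

Hypothesis c_derivable : forall x, a <= x <= b -> derivable c x 1.

Lemma derive1_ltr x y : a <= x -> x < y -> y <= b -> derive1 c x < derive1 c y.
Proof.
move=> ax xy yb; set m := (x + y) / 2.
have xm : x < m by rewrite /m; lra.
have my : m < y by rewrite /m; lra.
have am : a <= m by rewrite (le_trans ax) ?ltW.
have mb : m <= b by rewrite (le_trans (ltW my)).
apply: (@le_lt_trans _ _ (slope c x m)).
  apply: (@derive1_le_of_right_quotients c x _ (m - x)); rewrite ?subr_gt0 //.
    by apply: c_derivable; rewrite ax (le_trans (ltW xy)).
  exact: chord_right.
apply: (@lt_le_trans _ _ (slope c m y)); first exact: slope_midpoint_lt.
apply: (@derive1_ge_of_left_quotients c y _ (y - m)); rewrite ?subr_gt0 //.
  by apply: c_derivable; rewrite yb (le_trans ax (ltW xy)).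
exact: chord_left.
Qed.

End StrictConvexity.

Lemma is_xstar_le (R : realType) (c M xs : R -> R) xbar th1 th2 :
  cost_ok c xbar -> is_xstar c xbar M xs ->
  0 <= th1 <= 1 -> 0 <= th2 <= 1 -> M th2 <= M th1 -> xs th2 <= xs th1.
Proof.
move=> [_ [_ [_ [c_der [_ [_ c_convex]]]]]] hx th1_01 th2_01 M21.
have [/andP[x10 x1b] c'x1] := hx th1 th1_01.
have [/andP[x20 x2b] c'x2] := hx th2 th2_01.
rewrite leNgt; apply/negP => x12.
by have := derive1_ltr c_convex c_der x10 x12 x2b; rewrite c'x1 c'x2 ltNge M21.
Qed.

Unset Implicit Arguments.

Theorem proposition1 (R : realType) (n : nat) (F f : R -> R) (c : R -> R) (xbar : R)
  (v : nat -> R) (xs : R -> R) :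
  (2 <= n)%N -> noise_ok n F f -> cost_ok c xbar -> inV n v ->
  is_xstar c xbar (Mmarg n (beta n F f) v) xs ->
  ((forall r, (n./2 < r <= n)%N -> v r = 0) ->
     Lloss n (beta n F f) v <= 0 /\
     (forall th1 th2, 0 <= th1 -> th1 <= th2 -> th2 <= 1 ->
        Mmarg n (beta n F f) v th2 <= Mmarg n (beta n F f) v th1 /\ xs th2 <= xs th1)) /\
  ((forall r, (1 <= r <= uphalf n)%N -> v r = v 1%N) ->
     0 <= Lloss n (beta n F f) v /\
     (forall th1 th2, 0 <= th1 -> th1 <= th2 -> th2 <= 1 ->
        Mmarg n (beta n F f) v th1 <= Mmarg n (beta n F f) v th2 /\ xs th1 <= xs th2)).
Proof.
case: n => [|[|N]] // _ hn hc [v_nonincr _] hx.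
have psum_ge0 k : (k <= N.+2)%N -> 0 <= psum (beta N.+2 F f) k.
  exact: psum_beta_ge0.
have psum_n := psum_beta_n hn.
have in01 (th1 th2 : R) : 0 <= th1 -> th1 <= th2 -> th2 <= 1 ->
  0 <= th1 <= 1 /\ 0 <= th2 <= 1 by move=> *; split; apply/andP; split; lra.
split=> [v0 | v1].
- have L0 := Lloss_le0 psum_ge0 psum_n v_nonincr v0.
  split=> // th1 th2 th10 th12 th21; have [th1_01 th2_01] := in01 _ _ th10 th12 th21.
  have M21 := Mmarg_nonincreasing L0 th12.
  by split=> //; exact: is_xstar_le hc hx th1_01 th2_01 M21.
- have L0 := Lloss_ge0 psum_ge0 psum_n v_nonincr v1.
  split=> // th1 th2 th10 th12 th21; have [th1_01 th2_01] := in01 _ _ th10 th12 th21.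
  have M12 := Mmarg_nondecreasing L0 th12.
  by split=> //; exact: is_xstar_le hc hx th2_01 th1_01 M12.
Qed.
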